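(* Let $N\ge 1$ and consider subsystems $\Sigma_1,\dots,\Sigma_N$, their interconnection $\Sigma$, safe sets $X=\prod_{i=1}^N X_i$ and input sets $U=\prod_{i=1}^N U_i$, all as described in the context. For each $i\in[1;N]$ let $C_i:\mathbb{R}^{n_i}\rightrightarrows U_i$ be a safety controller for subsystem $\Sigma_i$ and safe set $X_i$. Define $C:\mathbb{R}^n\rightrightarrows U$ by $C(x)=\emptyset$ for $x\in\mathbb{R}^n\setminus X$ and, for $x=[x_1;\dots;x_N]\in X$ (i.e. $x_i\in X_i$ for all $i$), $$C(x)=\{u=[u_1;\dots;u_N]\in U \mid u_i\in C_i(x_i)\ \text{for all } i\in[1;N]\}.$$ Then $C$ is a safety controller for the interconnected system $\Sigma$ and safe set $X$.
   Context: Subsystem $\Sigma_i$ ($i\in[1;N]$) has state space $\mathbb{R}^{n_i}$, external input space $\mathbb{R}^{m_i}$, internal input $z_i=[z_{i1};\dots;z_{i(i-1)};z_{i(i+1)};\dots;z_{iN}]\in\mathbb{R}^{p_i}$ with $z_{ij}\in\mathbb{R}^{p_{ij}}$, a disturbance set $W_i\subseteq\mathbb{R}^{n_i}$, a state transition function $f_i:\mathbb{R}^{n_i}\times\mathbb{R}^{m_i}\times\mathbb{R}^{p_i}\times W_i\to\mathbb{R}^{n_i}$ (so $x_i(t+1)=f_i(x_i(t),u_i(t),z_i(t),w_i(t))$), and output maps $h_{ij}:\mathbb{R}^{n_i}\to\mathbb{R}^{q_{ij}}$, $j\in[1;N]$, where $q_{ji}=p_{ij}$ for $i\ne j$. The interconnected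 system $\Sigma$ has state space $\mathbb{R}^n$, $n=\sum_i n_i$, input space $\mathbb{R}^m$, $m=\sum_i m_i$, disturbance set $W=\prod_{i=1}^N W_i$, and transition function $f(x,u,w)=[f_1(x_1,u_1,z_1,w_1);\dots;f_N(x_N,u_N,z_N,w_N)]$ for $x=[x_1;\dots;x_N]$, $u=[u_1;\dots;u_N]$, $w=[w_1;\dots;w_N]$, where the interconnection variables are $z_{ij}=h_{ji}(x_j)$ for $i\neq j$. The sets $X_i\subseteq\mathbb{R}^{n_i}$ are compact safe sets and $U_i\subseteq\mathbb{R}^{m_i}$ admissible input sets. For $i\ne j$, sets $Z_{ij}\subseteq\mathbb{R}^{p_{ij}}$ are given with $h_{ji}(X_j)\subseteq Z_{ij}$, and $Z_i=\prod_{j\ne i}Z_{ij}$. A safety controller for $\Sigma$ and safe set $X$ is a set-valued map $C:\mathbb{R}^n\rightrightarrows U$ such that (1) $C(x)\subseteq U$ for all $x\in\mathbb{R}^n$; (2) $\mathrm{dom}(C)=\{x\in\mathbb{R}^n\mid C(x)\ne\emptyset\}\subseteq X$; (3) for all $x\in\mathrm{dom}(C)$, $u\in C(x)$, $w\in W$: $f(x,u,w)\in\mathrm{dom}(C)$. A safety controller for subsystem $\Sigma_i$ and safe set $X_i$ is a set-valued map $C_i:\mathbb{R}^{n_i}\rightrightarrows U_i$ with (1) $C_i(x_i)\subseteq U_i$ for all $x_i$; (2) $\mathrm{dom}(C_i)\subseteq X_i$; (3) for all $x_i\in\mathrm{dom}(C_i)$, $u_i\in C_i(x_i)$, $w_i\in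 W_i$, $z_i\in Z_i$: $f_i(x_i,u_i,z_i,w_i)\in\mathrm{dom}(C_i)$. *)

From HB Require Import structures.
From mathcomp Require Import all_boot all_order all_algebra.
From mathcomp Require Import all_classical all_reals topology normedtype.
Set Implicit Arguments. Unset Strict Implicit. Unset Printing Implicit Defensive.
Import Order.TTheory GRing.Theory Num.Theory.
Local Open Scope classical_set_scope.
Local Open Scope ring_scope.

Definition dom_ctrl (S I : Type) (C : S -> set I) : set S :=
  [set x | C x !=set0].

Definition is_safety_controller (S I D : Type) (f : S -> I -> D -> S)
    (Xs : set S) (Us : set I) (Ws : set D) (C : S -> set I) : Prop :=
  [/\ (forall x, C x `<=` Us),
      dom_ctrl C `<=` Xs &
      (forall x u w, dom_ctrl C x -> C x u -> Ws w -> dom_ctrl C (f x u w))].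

Definition is_sub_safety_controller (S I Z D : Type) (f : S -> I -> Z -> D -> S)
    (Xs : set S) (Us : set I) (Zs : set Z) (Ws : set D) (C : S -> set I) : Prop :=
  [/\ (forall x, C x `<=` Us),
      dom_ctrl C `<=` Xs &
      (forall x u z w, dom_ctrl C x -> C x u -> Zs z -> Ws w ->
         dom_ctrl C (f x u z w))].

Section Network.
Variables (R : realType) (N : nat) (n m : 'I_N -> nat) (p : 'I_N -> 'I_N -> nat).

Definition zin (i : 'I_N) : Type :=
  forall j : {j : 'I_N | j != i}, 'rV[R]_(p i (val j)).

(* states/inputs/disturbances of the interconnected system:
   x = [x_1; ...; x_N] represented componentwise *)
Definition gstate : Type := forall i : 'I_N, 'rV[R]_(n i).
Definition ginput : Type := forall i : 'I_N, 'rV[R]_(m i).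

(* interconnected dynamics, with z_ij = h_ji (x_j); h j i : R^{n_j} -> R^{q_ji}, q_ji = p_ij *)
Definition interconnect
    (f : forall i, 'rV[R]_(n i) -> 'rV[R]_(m i) -> zin i -> 'rV[R]_(n i) -> 'rV[R]_(n i))
    (h : forall j i, 'rV[R]_(n j) -> 'rV[R]_(p i j))
    (x : gstate) (u : ginput) (w : gstate) : gstate :=
  fun i => f i (x i) (u i) (fun j => h (val j) i (x (val j))) (w i).

Definition prod_set (T : 'I_N -> Type) (A : forall i, set (T i)) : set (forall i, T i) :=
  [set x | forall i, A i (x i)].

Definition compose_ctrl (X : forall i, set 'rV[R]_(n i)) (U : forall i, set 'rV[R]_(m i))
    (C : forall i, 'rV[R]_(n i) -> set 'rV[R]_(m i)) (x : gstate) : set ginput :=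
  [set u | prod_set X x /\ prod_set U u /\ (forall i, C i (x i) (u i))].

End Network.

(* The domain of the composed controller is the product of the domains of the
   [C i], which lie in the safe sets [X i].  Hence, from any state of that
   domain, every interconnection variable [z_ij = h_ji (x_j)] lies in [Z_ij],
   and the robust invariance of each [dom (C i)] against all internal inputs
   in [Z_i] applies componentwise. *)
From HB Require Import structures.
From mathcomp Require Import all_boot all_order all_algebra.
From mathcomp Require Import all_classical all_reals topology normedtype.
Local Open Scope classical_set_scope.
Local Open Scope ring_scope.

Lemma prod_set_neq0 {N : nat} {T : 'I_N -> Type} (A : forall i, set (T i)) :
  (forall i, A i !=set0) -> prod_set A !=set0.
Proof. by move=> A_neq0; exists (fun i => projT1 (cid (A_neq0 i))) => i; case: cid. Qed.

Section ComposeCtrl.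
Context {R : realType} {N : nat} {n m : 'I_N -> nat}.
Context {X : forall i, set 'rV[R]_(n i)} {U : forall i, set 'rV[R]_(m i)}.
Context {C : forall i, 'rV[R]_(n i) -> set 'rV[R]_(m i)}.
Hypothesis C_sub_U : forall i x, C i x `<=` U i.
Hypothesis dom_C_sub_X : forall i, dom_ctrl (C i) `<=` X i.

Lemma compose_ctrl_sub_prod_set x : compose_ctrl X U C x `<=` prod_set U.
Proof. by move=> u [_ []]. Qed.

Lemma dom_compose_ctrlP (x : gstate R n) :
  dom_ctrl (compose_ctrl X U C) x <-> forall i, dom_ctrl (C i) (x i).
Proof.
split=> [[u [_ [_ Cu]]] i | dom_x]; first by exists (u i).
have [u Cu] := @prod_set_neq0 _ _ (fun i => C i (x i)) dom_x.
exists u; split; last split.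
- by move=> i; exact: dom_C_sub_X (dom_x i).
- by move=> i; exact: C_sub_U (Cu i).
- exact: Cu.
Qed.

Lemma dom_compose_ctrl_sub_prod_set : dom_ctrl (compose_ctrl X U C) `<=` prod_set X.
Proof. by move=> x /dom_compose_ctrlP dom_x i; exact: dom_C_sub_X (dom_x i). Qed.

End ComposeCtrl.

Lemma interconnect_input_in_Z {R : realType} {N : nat} {n : 'I_N -> nat}
    {p : 'I_N -> 'I_N -> nat} {X : forall i, set 'rV[R]_(n i)}
    {Z : forall i j, set 'rV[R]_(p i j)}
    {h : forall j i, 'rV[R]_(n j) -> 'rV[R]_(p i j)} {x : gstate R n} :
  (forall i j, i != j -> h j i @` X j `<=` Z i j) -> prod_set X x ->
  forall i (j : {j : 'I_N | j != i}), Z i (val j) (h (val j) i (x (val j))).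
Proof.
move=> hX_sub_Z Xx i [j ji] /=.
by apply: (hX_sub_Z i j); [rewrite eq_sym | exists (x j)].
Qed.

Theorem theorem1 (R : realType) (N : nat) (n m : 'I_N -> nat)
    (p : 'I_N -> 'I_N -> nat)
    (f : forall i, 'rV[R]_(n i) -> 'rV[R]_(m i) -> zin R p i ->
           'rV[R]_(n i) -> 'rV[R]_(n i))
    (h : forall j i, 'rV[R]_(n j) -> 'rV[R]_(p i j))
    (W : forall i, set 'rV[R]_(n i))
    (X : forall i, set 'rV[R]_(n i))
    (U : forall i, set 'rV[R]_(m i))
    (Z : forall i j, set 'rV[R]_(p i j))
    (C : forall i, 'rV[R]_(n i) -> set 'rV[R]_(m i)) :
  (0 < N)%N ->
  (forall i, compact (X i : set 'rV[R^o]_(n i))) ->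
  (forall i j, i != j -> h j i @` X j `<=` Z i j) ->
  (forall i, is_sub_safety_controller (f i) (X i) (U i)
               [set z : zin R p i | forall j, Z i (val j) (z j)] (W i) (C i)) ->
  is_safety_controller (interconnect f h) (prod_set X) (prod_set U) (prod_set W)
    (compose_ctrl X U C).
Proof.
move=> _ _ hX_sub_Z subC.
have C_sub_U i : forall x, C i x `<=` U i by case: (subC i).
have dom_C_sub_X i : dom_ctrl (C i) `<=` X i by case: (subC i).
split.
- exact: compose_ctrl_sub_prod_set.
- exact: dom_compose_ctrl_sub_prod_set.
move=> x u w dom_x [_ [_ Cu]] Ww.
have Xx := dom_compose_ctrl_sub_prod_set C_sub_U dom_C_sub_X _ dom_x.
have {}dom_x := proj1 (dom_compose_ctrlP C_sub_U dom_C_sub_X x) dom_x.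
apply/(dom_compose_ctrlP C_sub_U dom_C_sub_X) => i.
have [_ _ dom_C_invariant] := subC i.
apply: dom_C_invariant; [exact: dom_x | exact: Cu | | exact: Ww].
exact: (interconnect_input_in_Z hX_sub_Z Xx i).
Qed.
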